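(* Let $k\in\mathbb N$, $E\subseteq W(A)$ and $\vec s=(s_n(x))_{n=0}^\infty\in V^\infty(A)$ such that $E$ is $k$-large in $\vec s$. Then there exist $m\in\mathbb N$ and $w(x)\in\langle (s_n(x))_{n=0}^m\,\|\,(A_{k+n})_{n=0}^m\rangle_v$ such that $\{w(a):a\in A_k\}\subseteq E$.
   Context: $\mathbb N=\{0,1,2,\dots\}$. Fix an increasing sequence $A_0\subseteq A_1\subseteq A_2\subseteq\cdots$ of finite nonempty alphabets and set $A=\bigcup_{n\in\mathbb N}A_n$. $W(A)$ denotes the set of all finite words over $A$, including the empty word; words are concatenated by juxtaposition. Fix a symbol $x\notin A$. A variable word over $A$ is a finite word over $A\cup\{x\}$ in which $x$ occurs at least once; $V(A)$ is the set of variable words. For $s(x)\in V(A)$ and $a\in A\cup\{x\}$, $s(a)$ is obtained by replacing every occurrence of $x$ by $a$. $V^\infty(A)$ is the set of infinite sequences of variable words. For a sequence $(s_n(x))_{n\in I}$ of variable words and a sequence $(B_n)_{n\in I}$ of finite subsets of $A$, both indexed by a set $I\subseteq\mathbb N$ that is either a finite interval or of the form $\{m,m+1,\dots\}$: the constant span $\langle (s_n(x))_{n\in I}\,\|\,(B_n)_{n\in I}\rangle_c$ is the set of all words $s_{l_0}(a_0)s_{l_1}(a_1)\cdots s_{l_j}(a_j)$ with $j\ge0$, $l_0<\dots<l_j$ in $I$ and $a_i\in B_{l_i}$ for each $i$; the variable span $\langle (s_n(x))_{n\in I}\,\|\,(B_n)_{n\in I}\rangle_v$ is the set of all words $s_{l_0}(a_0)\cdots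 s_{l_j}(a_j)$ with $j\ge0$, $l_0<\dots<l_j$ in $I$, $a_i\in B_{l_i}\cup\{x\}$ for each $i$, and at least one $a_i=x$. (E.g. $(A_{k+n})_{n=p}^{q}$ denotes the sequence $B_n=A_{k+n}$, $p\le n\le q$.) Extracted $k$-subsequences: let $k\in\mathbb N$ and $\vec s=(s_n(x))_{n=0}^\infty\in V^\infty(A)$. A finite sequence $(t_n(x))_{n=0}^l$ of variable words is an extracted $k$-subsequence of $\vec s$ if there exist integers $0=m_0<m_1<\dots<m_{l+1}$ with $t_i(x)\in\langle (s_n(x))_{n=m_i}^{m_{i+1}-1}\,\|\,(A_{k+n})_{n=m_i}^{m_{i+1}-1}\rangle_v$ for all $0\le i\le l$. An infinite sequence $\vec t=(t_n(x))_{n=0}^\infty$ is an extracted $k$-subsequence of $\vec s$ if each initial segment $(t_n(x))_{n=0}^l$ is a finite extracted $k$-subsequence of $\vec s$. We write $\vec t\le_k\vec s$. A set $E\subseteq W(A)$ is $k$-large in $\vec s\in V^\infty(A)$ if $E\cap\langle\vec w\,\|\,(A_{k+n})_{n=0}^\infty\rangle_c\neq\emptyset$ for every $\vec w\in V^\infty(A)$ with $\vec w\le_k\vec s$. *)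

From mathcomp Require Import all_boot.
Set Implicit Arguments. Unset Strict Implicit. Unset Printing Implicit Defensive.

(* Words over A are [seq T]; words over A ∪ {x} are [seq (option T)],
   where [None] is the variable symbol x (so x ∉ A automatically). *)

Section Words.
Variable T : eqType.

Definition inA (Al : nat -> seq T) (a : T) : Prop := exists n, a \in Al n.

Definition is_word (Al : nat -> seq T) (w : seq T) : Prop :=
  forall a, a \in w -> inA Al a.

Definition is_vword (Al : nat -> seq T) (w : seq (option T)) : Prop :=
  None \in w /\ forall a, Some a \in w -> inA Al a.

Definition subst_c (s : seq (option T)) (a : T) : seq T :=
  map (fun c => if c is Some b then b else a) s.

Definition subst_v (s : seq (option T)) (o : option T) : seq (option T) :=
  map (fun c => if c is Some b then Some b else o) s.

(* constant span < (s_n)_{n in I} || (B_n)_{n in I} >_c :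
   words s_{l_0}(a_0) ... s_{l_j}(a_j), j >= 0, l_0 < ... < l_j in I, a_i ∈ B_{l_i} *)
Definition cspan (I : nat -> Prop) (s : nat -> seq (option T))
    (B : nat -> seq T) (w : seq T) : Prop :=
  exists ps : seq (nat * T),
    [/\ 0 < size ps,
        sorted ltn (map fst ps),
        (forall p, p \in ps -> I p.1 /\ p.2 \in B p.1) &
        w = flatten (map (fun p => subst_c (s p.1) p.2) ps)].

(* variable span < (s_n)_{n in I} || (B_n)_{n in I} >_v :
   as above but a_i ∈ B_{l_i} ∪ {x}, with at least one a_i = x *)
Definition vspan (I : nat -> Prop) (s : nat -> seq (option T))
    (B : nat -> seq T) (w : seq (option T)) : Prop :=
  exists ps : seq (nat * option T),
    [/\ 0 < size ps,
        sorted ltn (map fst ps),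
        (forall p, p \in ps ->
            I p.1 /\ (if p.2 is Some a then a \in B p.1 else True)),
        None \in map snd ps &
        w = flatten (map (fun p => subst_v (s p.1) p.2) ps)].

(* finite extracted k-subsequence (t_0, ..., t_l) of s (here t = [:: t_0; ...; t_l]) *)
Definition ext_fin (Al : nat -> seq T) (k : nat) (t : seq (seq (option T)))
    (s : nat -> seq (option T)) : Prop :=
  exists ms : seq nat,
    [/\ size ms = (size t).+1,
        nth 0 ms 0 = 0,
        sorted ltn ms &
        forall i, i < size t ->
          vspan (fun n => nth 0 ms i <= n <= (nth 0 ms i.+1).-1) s
                (fun n => Al (k + n)) (nth [::] t i)].

Definition ext_le (Al : nat -> seq T) (k : nat) (t s : nat -> seq (option T)) : Prop :=
  forall l, ext_fin Al k (mkseq t l.+1) s.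

Definition k_large (Al : nat -> seq T) (k : nat) (E : seq T -> Prop)
    (s : nat -> seq (option T)) : Prop :=
  forall w : nat -> seq (option T),
    (forall n, is_vword Al (w n)) -> ext_le Al k w s ->
    exists u, E u /\ cspan (fun _ => True) w (fun n => Al (k + n)) u.

End Words.

From mathcomp Require Import all_boot.
From Stdlib Require Import ClassicalEpsilon Classical.
Set Implicit Arguments. Unset Strict Implicit. Unset Printing Implicit Defensive.

(* Assuming that no such w exists, we build
   consecutive blocks w_0, w_1, ... of s (each w_n a variable word in the
   variable span of a finite block of s) such that no constant-span word
   w_{l_0}(a_0) ... w_{l_j}(a_j) belongs to E.  Then (w_n) is an extracted
   k-subsequence of s, contradicting k-largeness.  The block w_n is chosen so
   that, for each of the finitely many constant-span words p of the previous
   blocks, the truth of "p w_n(b) \in E" does not depend on b \in A_{k+n};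
   this homogeneity comes from the Hales-Jewett theorem, and then any
   b with p w_n(b) \in E would make the variable word p w_n a witness. *)

Fixpoint all_words (C : eqType) (n : nat) (cs : seq C) : seq (seq C) :=
  if n is n'.+1 then [seq x :: y | x <- cs, y <- all_words n' cs] else [:: [::]].

Lemma mem_all_words (C : eqType) n (cs : seq C) w :
  (w \in all_words n cs) = (size w == n) && all (mem cs) w.
Proof.
elim: n w => [|n IH] [|x w] //=.
  by apply/allpairsP => -[[a b]] /= [_ _].
rewrite eqSS; apply/allpairsP/idP => [[[a b]] /= [Ha Hb [-> ->]]|].
  by move: Hb; rewrite IH Ha.
by case/and3P=> Hs Hx Hw; exists (x, w); rewrite /= IH Hs Hw.
Qed.

Lemma size_all_words (C : eqType) n (cs : seq C) : size (all_words n cs) = size cs ^ n.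
Proof. by elim: n => [|n IH] //=; rewrite size_allpairs IH expnS. Qed.

(* A combinatorial line over the letters 0..r-1 is a word over letters and the
   variable None; its i-th point substitutes i for the variable. *)
Definition point (L : seq (option nat)) (i : nat) : seq nat := map (odflt i) L.

Definition below (r : nat) (L : seq (option nat)) : bool :=
  all (oapp (fun a => a < r) true) L.

Definition is_line (r N : nat) (L : seq (option nat)) : bool :=
  [&& size L == N, None \in L & below r L].

Definition monochromatic (C : eqType) (r : nat) (col : seq nat -> C) L : Prop :=
  forall i, i < r -> col (point L i) = col (point L 0).

Lemma point_cat L1 L2 i : point (L1 ++ L2) i = point L1 i ++ point L2 i.
Proof. exact: map_cat. Qed.

Lemma point_const (x : seq nat) i : point (map Some x) i = x.
Proof. by rewrite /point -map_comp map_id. Qed.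

Lemma below_const r (x : seq nat) : below r (map Some x) = all (fun a => a < r) x.
Proof. by rewrite /below all_map. Qed.

Lemma size_point L i : size (point L i) = size L.
Proof. exact: size_map. Qed.

Lemma below_cat r L1 L2 : below r (L1 ++ L2) = below r L1 && below r L2.
Proof. exact: all_cat. Qed.

Lemma below_widen r r' L : r <= r' -> below r L -> below r' L.
Proof.
by move=> le_rr'; apply: sub_all => -[a|] //= /leq_trans; apply.
Qed.

Lemma below_point r L i : below r L -> i < r -> all (fun a => a < r) (point L i).
Proof. by move=> HL Hi; rewrite all_map; apply: sub_all HL => -[a|]. Qed.

Definition hales_jewett (r c : nat) : Prop :=
  exists N, forall (C : eqType) (cs : seq C) (col : seq nat -> C),
    size cs <= c -> (forall x, col x \in cs) ->
    exists L, is_line r N L /\ monochromatic r col L.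

(* The focusing statement: either a monochromatic line over r+1 letters
   exists, or there are s lines, monochromatic on their first r points, with
   distinct colours and all with the same r-th point (the focus) f. *)
Definition focusing (r c s : nat) : Prop :=
  exists N, forall (C : eqType) (cs : seq C) (col : seq nat -> C),
    size cs <= c -> (forall x, col x \in cs) ->
    (exists L, is_line r.+1 N L /\ monochromatic r.+1 col L)
    \/ (exists (f : seq nat) (Ls : seq (seq (option nat))),
         [/\ size f = N, all (fun a => a < r.+1) f, size Ls = s,
             uniq [seq col (point L 0) | L <- Ls] &
             forall L, L \in Ls ->
               [/\ is_line r.+1 N L, point L r = f & monochromatic r col L]]).

(* Applying HJ(r) to the colouring y |-> (col (x ++ y))_x of all words x of
   length n over r+1 letters gives a suffix line M whose r first points are
   indistinguishable after any such prefix x. *)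
Lemma uniform_extension r c n : (forall c', hales_jewett r c') ->
  exists m, forall (C : eqType) (cs : seq C) (col : seq nat -> C),
    size cs <= c -> (forall x, col x \in cs) ->
    exists M, is_line r m M /\
      forall x i, size x = n -> all (fun a => a < r.+1) x -> i < r ->
        col (x ++ point M i) = col (x ++ point M 0).
Proof.
move=> HJr; pose X := all_words n (iota 0 r.+1).
have [m Hm] := HJr (c ^ size X); exists m => C cs col Hcs Hcol.
pose col' y := [seq col (x ++ y) | x <- X].
have [||M [HM Hmono]] := Hm _ (all_words (size X) cs) col'.
- rewrite size_all_words leq_exp2r //.
  by rewrite size_all_words size_iota expn_gt0.
- move=> y; rewrite mem_all_words size_map eqxx.
  by apply/allP => _ /mapP[x _ ->]; apply: Hcol.
exists M; split => // x i Hx Hxr Hi.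
have /eq_in_map -> // := Hmono i Hi.
rewrite mem_all_words Hx eqxx; apply/allP => a /(allP Hxr) Ha.
by rewrite inE mem_iota.
Qed.

Lemma line_cat r n m L M :
  is_line r.+1 n L -> is_line r m M -> is_line r.+1 (n + m) (L ++ M).
Proof.
case/and3P=> /eqP <- HL HLr /and3P[/eqP <- _ /(below_widen (leqnSn r)) HMr].
by rewrite /is_line size_cat eqxx mem_cat HL below_cat HLr HMr.
Qed.

Lemma line_const_prefix r n m (f : seq nat) M :
  size f = n -> all (fun a => a < r.+1) f -> is_line r m M ->
  is_line r.+1 (n + m) (map Some f ++ M).
Proof.
move=> <- Hf /and3P[/eqP <- HM /(below_widen (leqnSn r)) HMr].
by rewrite /is_line size_cat size_map eqxx mem_cat HM orbT below_cat below_const Hf.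
Qed.

Lemma line_const_suffix r n m L (y : seq nat) :
  is_line r n L -> size y = m -> all (fun a => a < r) y ->
  is_line r (n + m) (L ++ map Some y).
Proof.
case/and3P=> /eqP <- HL HLr <- Hy.
by rewrite /is_line size_cat size_map eqxx mem_cat HL below_cat HLr below_const.
Qed.

(* Induction step on the number of focused lines: either the focus colour
   repeats (which yields a monochromatic line), or the old lines extended by M
   together with f ++ M give one more focused line, focused at f ++ point M r. *)
Lemma focusing_step r c s :
  (forall c', hales_jewett r c') -> focusing r c s -> focusing r c s.+1.
Proof.
move=> HJr [n Hn]; have [m Hm] := uniform_extension c n HJr.
exists (n + m) => C cs col Hcs Hcol.
have [M [HM HMunif]] := Hm C cs col Hcs Hcol.
have /and3P[/eqP HMsize _ /(below_widen (leqnSn r)) HMr] := HM.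
pose col0 x := col (x ++ point M 0).
have extend L : is_line r.+1 n L -> monochromatic r.+1 col0 L ->
    exists L', is_line r.+1 (n + m) L' /\ monochromatic r.+1 col L'.
  move=> HL HLmono; exists (L ++ map Some (point M 0)); split.
    by rewrite line_const_suffix ?size_point ?below_point.
  by move=> i Hi; rewrite !point_cat !point_const; apply: HLmono.
have [[L [HL HLmono]]|[f [Ls [Hf Hfr HLs Hu HLsp]]]] :=
  Hn C cs col0 Hcs (fun x => Hcol _).
  by left; apply: extend HLmono.
have [/mapP[L HL Heq]|Hnew] := boolP (col0 f \in [seq col0 (point L 0) | L <- Ls]).
  have [HLline HLf HLmono] := HLsp L HL.
  left; apply: (extend L HLline) => i; rewrite ltnS leq_eqVlt => /predU1P[->|Hi].
    by rewrite HLf.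
  exact: HLmono.
right; exists (f ++ point M r), ([seq L ++ M | L <- Ls] ++ [:: map Some f ++ M]).
split.
- by rewrite size_cat Hf size_point HMsize.
- by rewrite all_cat Hfr below_point.
- by rewrite size_cat size_map HLs addn1.
- rewrite map_cat -map_comp cats1 rcons_uniq /= point_cat point_const.
  rewrite (eq_map (g := fun L => col0 (point L 0))) => [|L /=].
    by rewrite Hnew Hu.
  by rewrite point_cat.
move=> L'; rewrite mem_cat mem_seq1 => /orP[/mapP[L HL ->]|/eqP ->].
  have [HLline HLf HLmono] := HLsp L HL.
  have /and3P[/eqP HLsize _ HLr] := HLline.
  split; first exact: line_cat.
    by rewrite point_cat HLf.
  move=> i Hi; have Hir : i < r.+1 by apply: ltnW.
  rewrite !point_cat HMunif ?size_point ?below_point //.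
  exact: HLmono.
split; first exact: line_const_prefix.
  by rewrite point_cat point_const.
by move=> i Hi; rewrite !point_cat !point_const HMunif.
Qed.

(* The Hales-Jewett theorem, by induction on r: c focused lines with distinct
   colours exhaust the c colours, so the colour of the focus repeats. *)
Theorem hales_jewett_all r c : hales_jewett r c.
Proof.
elim: r c => [|r IHr] c; first by exists 1 => C cs col _ _; exists [:: None].
have Hfocus s : focusing r c s.
  elim: s => [|s IHs]; last exact: focusing_step IHr IHs.
  by exists 0 => C cs col _ _; right; exists [::], [::].
have [N HN] := Hfocus c.
exists N => C cs col Hcs Hcol.
have [//|[f [Ls [_ _ HLs Hu HLsp]]]] := HN C cs col Hcs Hcol.
have Hsub : {subset [seq col (point L 0) | L <- Ls] <= cs} by move=> _ /mapP[L _ ->].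
have Hsize : c <= size [seq col (point L 0) | L <- Ls] by rewrite size_map HLs.
have [_ Hall] := uniq_min_size Hu Hsub (leq_trans Hcs Hsize).
have /mapP[L HL Heq] : col f \in [seq col (point L 0) | L <- Ls] by rewrite Hall.
have [HLline HLf HLmono] := HLsp L HL.
exists L; split => // i; rewrite ltnS leq_eqVlt => /predU1P[->|Hi]; last exact: HLmono.
by rewrite HLf.
Qed.

Lemma sorted_ltn_cat (xs ys : seq nat) :
  sorted ltn (xs ++ ys) = [&& sorted ltn xs, sorted ltn ys & allrel ltn xs ys].
Proof. by rewrite !(sorted_pairwise ltn_trans) pairwise_cat andbC -andbA. Qed.

Lemma sorted_ltn_rcons (xs : seq nat) x :
  sorted ltn (rcons xs x) = sorted ltn xs && all (ltn^~ x) xs.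
Proof. by rewrite !(sorted_pairwise ltn_trans) pairwise_rcons andbC. Qed.

Section Spans.
Variables (T : eqType) (s : nat -> seq (option T)) (B : nat -> seq T).

Definition cword (qs : seq (nat * T)) : seq T :=
  flatten [seq subst_c (s q.1) q.2 | q <- qs].

Definition vword (ps : seq (nat * option T)) : seq (option T) :=
  flatten [seq subst_v (s q.1) q.2 | q <- ps].

Lemma subst_c_cat (x y : seq (option T)) b :
  subst_c (x ++ y) b = subst_c x b ++ subst_c y b.
Proof. exact: map_cat. Qed.

Lemma subst_c_const (p : seq T) b : subst_c (map Some p) b = p.
Proof. by rewrite /subst_c -map_comp map_id. Qed.

Lemma subst_c_vword ps b :
  subst_c (vword ps) b = cword [seq (q.1, odflt b q.2) | q <- ps].
Proof.
rewrite /subst_c /vword /cword map_flatten -!map_comp; congr flatten.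
by apply: eq_map => -[i o] /=; rewrite -map_comp; apply: eq_map => -[c|] //; case: o.
Qed.

Lemma vword_const qs : vword [seq (q.1, Some q.2) | q <- qs] = map Some (cword qs).
Proof.
rewrite /vword /cword map_flatten -!map_comp; congr flatten.
by apply: eq_map => q /=; rewrite -map_comp; apply: eq_map => -[c|].
Qed.

Lemma cword_cat qs qs' : cword (qs ++ qs') = cword qs ++ cword qs'.
Proof. by rewrite /cword map_cat flatten_cat. Qed.

Lemma cword_rcons qs q : cword (rcons qs q) = cword qs ++ subst_c (s q.1) q.2.
Proof. by rewrite -cats1 cword_cat /cword /= cats0. Qed.

Definition const_below (M : nat) (p : seq T) : Prop :=
  exists qs : seq (nat * T),
    [/\ sorted ltn (map fst qs),
        forall q, q \in qs -> q.1 < M /\ q.2 \in B q.1 &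
        p = cword qs].

Lemma const_below_mono M M' p : M <= M' -> const_below M p -> const_below M' p.
Proof.
move=> le_MM' [qs [Hsorted Hqs ->]]; exists qs; split => // q /Hqs[Hq1 Hq2].
by split => //; apply: leq_trans le_MM'.
Qed.

Lemma vspan_interval M m t :
  vspan (fun j => M <= j <= m) s B t -> M <= m.
Proof.
case=> -[|q ps] [// _ _ /(_ q (mem_head _ _)) [/andP[HM Hm] _] _ _].
exact: leq_trans Hm.
Qed.

Lemma vspan_const_prefix M m p t :
  const_below M p -> vspan (fun j => M <= j <= m) s B t ->
  vspan (fun j => j <= m) s B (map Some p ++ t).
Proof.
move=> [qs [Hqs Hqm ->]] Ht; have le_Mm := vspan_interval Ht.
case: Ht => ps [Hps0 Hps Hpsm HNone ->].
have Hfst : map fst [seq (q.1, Some q.2) | q <- qs] = map fst qs by rewrite -map_comp.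
exists ([seq (q.1, Some q.2) | q <- qs] ++ ps); split.
- by rewrite size_cat addn_gt0 Hps0 orbT.
- rewrite map_cat sorted_ltn_cat Hfst Hqs Hps; apply/allrelP => i j.
  case/mapP=> q /Hqm[Hq _] -> /mapP[q' /Hpsm[/andP[HMq' _] _] ->].
  exact: leq_trans HMq'.
- move=> q; rewrite mem_cat => /orP[/mapP[q' /Hqm[Hq1 Hq2] ->]|/Hpsm[/andP[_ ->] //]].
  by split => //; apply: leq_trans (ltnW Hq1) le_Mm.
- by rewrite map_cat mem_cat HNone orbT.
- by rewrite /vword map_cat flatten_cat -vword_const.
Qed.

Lemma const_below_extend M m p t b :
  (forall j, M <= j -> b \in B j) ->
  const_below M p -> vspan (fun j => M <= j <= m) s B t ->
  const_below m.+1 (p ++ subst_c t b).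
Proof.
move=> Hb [qs [Hqs Hqm ->]] Ht; have le_Mm := vspan_interval Ht.
case: Ht => ps [_ Hps Hpsm _ ->].
have Hfst : map fst [seq (q.1, odflt b q.2) | q <- ps] = map fst ps by rewrite -map_comp.
exists (qs ++ [seq (q.1, odflt b q.2) | q <- ps]); split.
- rewrite map_cat sorted_ltn_cat Hfst Hqs Hps; apply/allrelP => i j.
  case/mapP=> q /Hqm[Hq _] -> /mapP[q' /Hpsm[/andP[HMq' _] _] ->].
  exact: leq_trans HMq'.
- move=> q; rewrite mem_cat.
  case/orP=> [/Hqm[Hq1 Hq2]|/mapP[q' /Hpsm[/andP[HMq' Hq'm] Hlet] ->]].
    by split => //; apply: leq_trans Hq1 (leqW le_Mm).
  by split => //=; case: q'.2 Hlet => [a|] //= _; apply: Hb.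
- by rewrite cword_cat subst_c_vword.
Qed.

End Spans.

Lemma vspan_vword (T : eqType) (Al : nat -> seq T) (s : nat -> seq (option T))
    (B : nat -> seq T) (I : nat -> Prop) (w : seq (option T)) :
  (forall n, is_vword Al (s n)) -> (forall j a, a \in B j -> inA Al a) ->
  vspan I s B w -> is_vword Al w.
Proof.
move=> Hs HB [ps [_ _ Hpsm HNone ->]]; split.
  case/mapP: HNone => q Hq Hq2; apply/flattenP; exists (subst_v (s q.1) q.2).
    exact: map_f.
  by rewrite -Hq2; apply/mapP; exists None => //; case: (Hs q.1).
move=> a /flattenP[x /mapP[q Hq ->]] /mapP[[c|] Hc].
  by case=> ->; case: (Hs q.1) => _; apply.
by move=> Ha; have [_] := Hpsm q Hq; rewrite -Ha; apply: HB.
Qed.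

Definition holds (X : Prop) : bool :=
  if excluded_middle_informative X then true else false.

Lemma holdsP (X : Prop) : reflect X (holds X).
Proof. by rewrite /holds; case: excluded_middle_informative => HX; constructor. Qed.

(* Proof: colour each
   word y over |A| letters by the truth values of F (p ++ img y), p \in P, and
   take t from a monochromatic Hales-Jewett line. *)
Lemma homogeneous_block (T : eqType) (s : nat -> seq (option T)) (A : seq T)
    (F : seq T -> Prop) (P : seq (seq T)) (M : nat) :
  0 < size A ->
  exists ps : seq (nat * option T),
    [/\ map fst ps = iota M (size ps), None \in map snd ps,
        forall q, q \in ps -> if q.2 is Some a then a \in A else true &
        forall p a b, p \in P -> a \in A -> b \in A ->
          F (p ++ subst_c (vword s ps) a) -> F (p ++ subst_c (vword s ps) b)].
Proof.
case: A => // a0 A' _; set A := a0 :: A'.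
pose img (y : seq nat) :=
  cword s [seq (M + i, nth a0 A (nth 0 y i)) | i <- iota 0 (size y)].
pose col (y : seq nat) := [seq holds (F (p ++ img y)) | p <- P].
have [N HN] := hales_jewett_all (size A) (2 ^ size P).
have [||L [/and3P[_ HNoneL HLr] HLmono]] :=
  HN _ (all_words (size P) [:: true; false]) col.
- by rewrite size_all_words.
- by move=> y; rewrite mem_all_words size_map eqxx; apply/allP => -[].
pose ps := [seq (M + i, omap (nth a0 A) (nth None L i)) | i <- iota 0 (size L)].
have Himg b : b \in A -> subst_c (vword s ps) b = img (point L (index b A)).
  move=> Hb; rewrite subst_c_vword /img size_point -map_comp; congr cword.
  apply/eq_in_map => i; rewrite mem_iota => /andP[_ Hi] /=.
  by rewrite (nth_map None) //; case: (nth None L i) => [o|] //=; rewrite nth_index.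
exists ps; split.
- by rewrite size_map size_iota -map_comp -[M]addn0 iotaDl addn0.
- apply/mapP; exists (M + index None L, None) => //.
  by apply/mapP; exists (index None L); rewrite ?mem_iota ?index_mem ?nth_index.
- move=> q /mapP[i]; rewrite mem_iota => /andP[_ Hi] -> /=.
  case HLi: (nth None L i) => [o|] //=; apply: mem_nth.
  by have := allP HLr _ (mem_nth None Hi); rewrite HLi.
move=> p a b Hp Ha Hb; rewrite !Himg // => /holdsP HFa; apply/holdsP.
have Hcol : col (point L (index b A)) = col (point L (index a A)).
  by rewrite HLmono ?index_mem // [RHS]HLmono ?index_mem.
by have /eq_in_map/(_ p Hp) /= -> := Hcol.
Qed.

Lemma alphabet_mono (T : eqType) (Al : nat -> seq T) i j a :
  (forall n a, a \in Al n -> a \in Al n.+1) -> i <= j -> a \in Al i -> a \in Al j.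
Proof.
move=> HAinc /subnK <-; elim: (j - i) => [|d IH] Ha; first by rewrite add0n.
by rewrite addSn; apply: HAinc; apply: IH.
Qed.

Section Construction.
Variables (T : eqType) (Al : nat -> seq T).
Hypothesis HAne : forall n, 0 < size (Al n).
Hypothesis HAinc : forall n a, a \in Al n -> a \in Al n.+1.
Variables (k : nat) (E : seq T -> Prop) (s : nat -> seq (option T)).
Hypothesis Hs : forall n, is_vword Al (s n).
Hypothesis no_witness : forall m w,
  vspan (fun n => n <= m) s (fun n => Al (k + n)) w ->
  exists a, a \in Al k /\ ~ E (subst_c w a).

Local Notation Ak := (fun n => Al (k + n)).

Definition stage_ok (n : nat) (P : seq (seq T)) (M : nat) : Prop :=
  n <= M /\ forall p, p \in P -> const_below s Ak M p.

Definition good_block (n : nat) (P : seq (seq T)) (M : nat)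
    (t : seq (option T)) (N : nat) : Prop :=
  [/\ 0 < N, vspan (fun j => M <= j <= (M + N).-1) s Ak t &
      forall p b, p \in P -> b \in Al (k + n) -> ~ E (p ++ subst_c t b)].

(* Homogeneity plus the failure of fact3p7 make the homogeneous block good:
   if p t(b) were in E then the witness p t would contradict the assumption. *)
Lemma good_block_exists n P M :
  stage_ok n P M -> exists tN, good_block n P M tN.1 tN.2.
Proof.
move=> [le_nM HP].
have [ps [Hfst HNone Hlet Hhom]] := homogeneous_block s E P M (HAne (k + n)).
have Hps0 : 0 < size ps by case: ps {Hfst Hlet Hhom} HNone.
have Hspan : vspan (fun j => M <= j <= (M + size ps).-1) s Ak (vword s ps).
  exists ps; split => // [|q Hq].
    by rewrite Hfst iota_ltn_sorted.
  have := map_f fst Hq; rewrite Hfst mem_iota => /andP[HMq Hq1]; split.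
    by rewrite HMq -ltnS prednK // addn_gt0 Hps0 orbT.
  have := Hlet q Hq; case: q.2 => // a; apply: alphabet_mono => //.
  by rewrite leq_add2l (leq_trans le_nM).
exists (vword s ps, size ps); split => //= p b Hp Hb HEb.
have [a [Ha HnEa]] := no_witness (vspan_const_prefix (HP p Hp) Hspan).
apply: HnEa; rewrite subst_c_cat subst_c_const; apply: Hhom HEb => //.
by apply: alphabet_mono Ha; rewrite ?leq_addr.
Qed.

Definition next_block (n : nat) (P : seq (seq T)) (M : nat) : seq (option T) * nat :=
  epsilon (inhabits ([::], 0)) (fun tN => good_block n P M tN.1 tN.2).

Lemma next_blockP n P M : stage_ok n P M ->
  good_block n P M (next_block n P M).1 (next_block n P M).2.
Proof. by move/good_block_exists; apply: epsilon_spec. Qed.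

(* Stage n: the constant-span words of w_0, ..., w_{n-1} (with repetitions) and
   the start M_n of the next block. *)
Fixpoint stage (n : nat) : seq (seq T) * nat :=
  if n is n'.+1 then
    let st := stage n' in
    let tN := next_block n' st.1 st.2 in
    (st.1 ++ [seq p ++ subst_c tN.1 b | p <- st.1, b <- Al (k + n')], st.2 + tN.2)
  else ([:: [::]], 0).

Definition block (n : nat) : seq (option T) :=
  (next_block n (stage n).1 (stage n).2).1.

Definition block_len (n : nat) : nat := (next_block n (stage n).1 (stage n).2).2.

Lemma stage_ok_step n P M t N : stage_ok n P M -> good_block n P M t N ->
  stage_ok n.+1 (P ++ [seq p ++ subst_c t b | p <- P, b <- Al (k + n)]) (M + N).
Proof.
move=> [le_nM HP] [HN Hspan _]; split; first by rewrite -addn1 leq_add.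
move=> p; rewrite mem_cat => /orP[/HP|/allpairsP[[p0 b] /= [Hp0 Hb ->]]].
  by apply: const_below_mono; rewrite leq_addr.
rewrite -[M + N]prednK ?addn_gt0 ?HN ?orbT //.
apply: const_below_extend (HP p0 Hp0) Hspan => j HMj.
by apply: alphabet_mono Hb; rewrite // leq_add2l (leq_trans le_nM).
Qed.

Lemma stage_invariant n : stage_ok n (stage n).1 (stage n).2.
Proof.
elim: n => [|n IH]; last exact: stage_ok_step IH (next_blockP IH).
by split => // p; rewrite mem_seq1 => /eqP ->; exists [::].
Qed.

Lemma block_good n : good_block n (stage n).1 (stage n).2 (block n) (block_len n).
Proof. exact: next_blockP (stage_invariant n). Qed.

Lemma stage_mono m n : m <= n -> {subset (stage m).1 <= (stage n).1}.
Proof.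
move/subnK <-; elim: (n - m) => [|d IH] p Hp; first by rewrite add0n.
by rewrite addSn /= mem_cat IH.
Qed.

Lemma stage_complete n qs :
  sorted ltn (map fst qs) ->
  (forall q, q \in qs -> q.1 < n /\ q.2 \in Al (k + q.1)) ->
  cword block qs \in (stage n).1.
Proof.
elim/last_ind: qs n => [|qs q IH] n Hsorted Hqs.
  by apply: (stage_mono (leq0n n)); rewrite mem_seq1.
move: Hsorted; rewrite map_rcons sorted_ltn_rcons => /andP[Hsorted Hlast].
have [Hqn Hbq] : q.1 < n /\ q.2 \in Al (k + q.1).
  by apply: Hqs; rewrite mem_rcons mem_head.
apply: (stage_mono Hqn); rewrite cword_rcons /= mem_cat; apply/orP; right.
apply: (allpairs_f (fun p b => p ++ subst_c (block q.1) b)) => //.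
apply: IH => // x Hx; split; first exact: (allP Hlast _ (map_f _ Hx)).
by case: (Hqs x); rewrite // mem_rcons in_cons Hx orbT.
Qed.

(* The blocks are nonempty, so the block starts M_n increase strictly. *)
Lemma stage_len_increasing i : (stage i).2 < (stage i.+1).2.
Proof. by rewrite /= -addn1 leq_add2l; have [] := block_good i. Qed.

(* (w_n) is an extracted k-subsequence of s, the blocks being [M_n, M_{n+1}). *)
Lemma blocks_extracted : ext_le Al k block s.
Proof.
move=> l; exists [seq (stage i).2 | i <- iota 0 l.+2]; split => //.
- by rewrite size_map size_iota size_mkseq.
- rewrite sorted_map; apply: sub_sorted (iota_ltn_sorted 0 l.+2) => i j.
  exact: (homo_ltn ltn_trans stage_len_increasing).
move=> i; rewrite size_mkseq => Hi; have Hi' : i < l.+2 by apply: ltnW.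
rewrite nth_mkseq // !(nth_map 0) ?size_iota ?nth_iota ?add0n //.
by have [] := block_good i.
Qed.

(* k-largeness yields a constant-span word of (w_n) in E; splitting off its
   last letter contradicts the goodness of the corresponding block. *)
Lemma large_contradiction : k_large Al k E s -> False.
Proof.
move=> Hlarge.
have Hvword n : is_vword Al (block n).
  have [_ Hspan _] := block_good n.
  by apply: vspan_vword Hs _ Hspan => j a Ha; exists (k + j).
have [u [Eu [ps [Hps0 Hsorted Hpsm Hu]]]] := Hlarge block Hvword blocks_extracted.
case/lastP: ps Hps0 Hsorted Hpsm Hu => [//|ps [l b]] _ + Hpsm Hu.
rewrite map_rcons sorted_ltn_rcons => /andP[Hsorted Hlast].
have Hpre : cword block ps \in (stage l).1.
  apply: stage_complete => // q Hq; split; first exact: (allP Hlast _ (map_f _ Hq)).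
  by case: (Hpsm q); rewrite // mem_rcons in_cons Hq orbT.
have [_ _ Hblock] := block_good l; apply: (Hblock _ b Hpre).
  by case: (Hpsm (l, b)); rewrite // mem_rcons mem_head.
by rewrite -(cword_rcons block ps (l, b)) /cword -Hu.
Qed.

End Construction.

Theorem fact3p7 (T : eqType) (Al : nat -> seq T)
  (HAne : forall n, 0 < size (Al n))
  (HAinc : forall n a, a \in Al n -> a \in Al n.+1)
  (k : nat) (E : seq T -> Prop)
  (HE : forall u, E u -> is_word Al u)
  (s : nat -> seq (option T))
  (Hs : forall n, is_vword Al (s n))
  (Hlarge : k_large Al k E s) :
  exists (m : nat) (w : seq (option T)),
    vspan (fun n => n <= m) s (fun n => Al (k + n)) w /\
    (forall a, a \in Al k -> E (subst_c w a)).
Proof.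
apply: NNPP => Hno.
have no_witness m w : vspan (fun n => n <= m) s (fun n => Al (k + n)) w ->
    exists a, a \in Al k /\ ~ E (subst_c w a).
  move=> Hw; apply: NNPP => Hall; apply: Hno; exists m, w; split => // a Ha.
  by apply: NNPP => HnE; apply: Hall; exists a.
exact: (large_contradiction HAne HAinc Hs no_witness Hlarge).
Qed.
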